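(* Let $\phi:\mathcal N_1\to\mathcal N_2$ be an admissible epi-functor between nested graphs. Then there exist a nested graph $\mathcal N_2'$, a merger $\mu:\mathcal N_1\to\mathcal N_2'$ and a contraction $\kappa:\mathcal N_2'\to\mathcal N_2$ such that $\phi=\kappa\circ\mu$ (such a decomposition is in general not unique).
   Context: A nested graph is a small category $\mathcal N$ for which there exists at least one functor $G:\mathcal N\to\underline n$ to a finite ordinal $\underline n$ (viewed as the category with a unique morphism $i\to j$ when $i\le j$ and none otherwise) sending every non-identity morphism to a non-identity morphism. Objects are called nodes. A flag is a non-identity morphism, said to be decorated by its domain. A flag is irreducible if it is not a composite of two flags. A vertex of a nested graph is a node that is not the domain of any flag; a corolla is a nested graph with exactly one vertex. A functor $\phi$ contracts a flag $f$ if $\phi(f)$ is an identity. A functor $\phi:\mathcal N_1\to\mathcal N_2$ between nested graphs is admissible if (1) for every irreducible flag $f$ of $\mathcal N_1$, $\phi(f)$ is an identity or an irreducible flag, and (2) for every irreducible flag $f:A\to B$ of $\mathcal N_1$ contracted by $\phi$, $\phi$ contracts every irreducible flag with domain $A$. An epi-functor $\phi:\mathcal N_1\to\mathcal N_2$ is a functor whose image generates all of $\mathcal N_2$. A merger is an admissible epi-functor $\mu:\mathcal N_1\to\mathcal N_2$ such that $\mathcal N_2$ is a quotient of $\mathcal N_1$ by an equivalence relation on the objects of $\mathcal N_1$. A contraction is an admissible epi-functor $\kappa:\mathcal N_1\to\mathcal N_2$ such that for every node $A_2$ of $\mathcal N_2$ the fiber $\kappa^{-1}(A_2)$ (objects mapped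 to $A_2$, morphisms mapped to the identity of $A_2$) is a corolla. *)

From mathcomp Require Import all_boot.
From Stdlib Require Import ProofIrrelevance Eqdep.

Set Implicit Arguments.
Unset Strict Implicit.
Unset Printing Implicit Defensive.

Record Category := {
  Obj :> Type;
  Hom : Obj -> Obj -> Type;
  idm : forall A, Hom A A;
  cmp : forall A B C, Hom B C -> Hom A B -> Hom A C;
  cmp_id_l : forall A B (f : Hom A B), cmp (idm B) f = f;
  cmp_id_r : forall A B (f : Hom A B), cmp f (idm A) = f;
  cmp_assoc : forall A B C D (h : Hom C D) (g : Hom B C) (f : Hom A B),
      cmp h (cmp g f) = cmp (cmp h g) f
}.
Arguments Hom {c} _ _.
Arguments idm {c} _.
Arguments cmp {c A B C} _ _.

Record Functor (C D : Category) := {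
  fobj :> C -> D;
  fmor : forall A B, Hom A B -> Hom (fobj A) (fobj B);
  fmor_id : forall A, fmor (idm A) = idm (fobj A);
  fmor_cmp : forall A B E (g : Hom B E) (f : Hom A B),
      fmor (cmp g f) = cmp (fmor g) (fmor f)
}.
Arguments fmor {C D} _ {A B} _.

Definition Arr (C : Category) := {p : C * C & Hom p.1 p.2}.
Definition arr {C : Category} {A B : C} (f : Hom A B) : Arr C :=
  existT (fun p : C * C => Hom p.1 p.2) (A, B) f.
Definition idarr {C : Category} (A : C) : Arr C := arr (idm A).
Definition dom {C : Category} (a : Arr C) : C := (projT1 a).1.

Definition farr {C D : Category} (F : Functor C D) (a : Arr C) : Arr D :=
  arr (fmor F (projT2 a)).

(* Equality of functors: they agree on every morphism (hence on objects). *)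
Definition functor_eq {C D : Category} (F G : Functor C D) : Prop :=
  forall a : Arr C, farr F a = farr G a.

Definition functor_comp {C D E : Category} (G : Functor D E) (F : Functor C D)
  : Functor C E.
Proof.
refine {| fobj := fun A => G (F A);
          fmor := fun A B f => fmor G (fmor F f) |}.
- by move=> A; rewrite !fmor_id.
- by move=> A B E' g f; rewrite !fmor_cmp.
Defined.

Definition ordinal_category (n : nat) : Category.
Proof.
refine {| Obj := 'I_n;
          Hom := fun i j => (nat_of_ord i <= nat_of_ord j)%N;
          idm := fun i => leqnn i;
          cmp := fun i j k g f => leq_trans f g |}.
- by move=> *; apply: eq_irrelevance.
- by move=> *; apply: eq_irrelevance.
- by move=> *; apply: eq_irrelevance.
Defined.

Definition is_identity {C : Category} (a : Arr C) : Prop :=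
  exists A : C, a = idarr A.

Definition is_flag {C : Category} (a : Arr C) : Prop := ~ is_identity a.

Definition irreducible {C : Category} (a : Arr C) : Prop :=
  is_flag a /\
  ~ (exists (A B E : C) (g : Hom B E) (f : Hom A B),
        is_flag (arr g) /\ is_flag (arr f) /\ a = arr (cmp g f)).

Definition nested_graph (N : Category) : Prop :=
  exists (n : nat) (G : Functor N (ordinal_category n)),
    forall a : Arr N, is_flag a -> is_flag (farr G a).

Definition is_vertex {N : Category} (A : N) : Prop :=
  forall a : Arr N, dom a = A -> ~ is_flag a.

Definition corolla (N : Category) : Prop :=
  nested_graph N /\ exists A : N, is_vertex A /\ forall B : N, is_vertex B -> B = A.

Definition contracts {C D : Category} (F : Functor C D) (a : Arr C) : Prop :=
  is_identity (farr F a).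

Definition admissible {C D : Category} (F : Functor C D) : Prop :=
  (forall a : Arr C, irreducible a ->
     is_identity (farr F a) \/ irreducible (farr F a)) /\
  (forall a : Arr C, irreducible a -> contracts F a ->
     forall b : Arr C, irreducible b -> dom b = dom a -> contracts F b).

Inductive generated {C D : Category} (F : Functor C D) : Arr D -> Prop :=
  | gen_img : forall a : Arr C, generated F (farr F a)
  | gen_cmp : forall (A B E : D) (g : Hom B E) (f : Hom A B),
      generated F (arr g) -> generated F (arr f) -> generated F (arr (cmp g f)).

Definition epi_functor {C D : Category} (F : Functor C D) : Prop :=
  forall a : Arr D, generated F a.

(* F : C -> D exhibits D as the quotient of C by the equivalence relation R
   on objects (universal property of the quotient category C/R). *)
Definition is_quotient_by {C D : Category} (F : Functor C D) (R : C -> C -> Prop)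
  : Prop :=
  (forall A B, R A B -> F A = F B) /\
  forall (E : Category) (H : Functor C E),
    (forall A B, R A B -> H A = H B) ->
    exists G : Functor D E,
      functor_eq (functor_comp G F) H /\
      forall G' : Functor D E, functor_eq (functor_comp G' F) H -> functor_eq G' G.

Definition is_equivalence {T : Type} (R : T -> T -> Prop) : Prop :=
  (forall x, R x x) /\ (forall x y, R x y -> R y x) /\
  (forall x y z, R x y -> R y z -> R x z).

Definition merger {C D : Category} (F : Functor C D) : Prop :=
  admissible F /\ epi_functor F /\
  exists R : C -> C -> Prop, is_equivalence R /\ is_quotient_by F R.

Lemma arr_cmp_id (C : Category) (X P Q S : C) (g : Hom Q S) (f : Hom P Q) :
  arr g = idarr X -> arr f = idarr X -> arr (cmp g f) = idarr X.
Proof.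
move=> Hg Hf.
have eQ : Q = X by move: (f_equal (fun a => (projT1 a).1) Hg).
have eS : S = X by move: (f_equal (fun a => (projT1 a).2) Hg).
have eP : P = X by move: (f_equal (fun a => (projT1 a).1) Hf).
subst.
have -> := inj_pair2 _ _ _ _ _ Hg.
have -> := inj_pair2 _ _ _ _ _ Hf.
by rewrite cmp_id_l.
Qed.

Definition fiber_hom {C D : Category} (F : Functor C D) (X : D)
  (a b : {A : C | F A = X}) : Type :=
  {f : Hom (proj1_sig a) (proj1_sig b) | arr (fmor F f) = idarr X}.

Lemma fiber_id_proof (C D : Category) (F : Functor C D) (X : D)
  (a : {A : C | F A = X}) : arr (fmor F (idm (proj1_sig a))) = idarr X.
Proof. by case: a => A e /=; rewrite fmor_id; subst. Qed.

Lemma sig_eq_irr (T : Type) (P : T -> Prop) (x y : {t | P t}) :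
  proj1_sig x = proj1_sig y -> x = y.
Proof.
case: x => x px; case: y => y py /= e; subst; congr exist; apply: proof_irrelevance.
Qed.

Lemma fiber_cmp_proof (C D : Category) (F : Functor C D) (X : D)
  (a b c : {A : C | F A = X}) (g : @fiber_hom C D F X b c) (f : @fiber_hom C D F X a b) :
  arr (fmor F (cmp (proj1_sig g) (proj1_sig f))) = idarr X.
Proof.
rewrite fmor_cmp; apply: arr_cmp_id; [exact: proj2_sig g | exact: proj2_sig f].
Qed.

Definition fiber {C D : Category} (F : Functor C D) (X : D) : Category.
Proof.
refine {| Obj := {A : C | F A = X};
          Hom := @fiber_hom C D F X;
          idm := fun a => exist _ (idm (proj1_sig a)) (@fiber_id_proof C D F X a);
          cmp := fun a b c g f =>
            exist _ (cmp (proj1_sig g) (proj1_sig f)) (@fiber_cmp_proof C D F X a b c g f) |}.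
- by move=> a b f; apply: sig_eq_irr; rewrite /= cmp_id_l.
- by move=> a b f; apply: sig_eq_irr; rewrite /= cmp_id_r.
- by move=> a b c d h g f; apply: sig_eq_irr; rewrite /= cmp_assoc.
Defined.

Definition contraction {C D : Category} (F : Functor C D) : Prop :=
  admissible F /\ epi_functor F /\ forall X : D, corolla (fiber F X).

From mathcomp Require Import all_boot zify.
From Stdlib Require Import ProofIrrelevance Eqdep ClassicalEpsilon Classical.

(* Inside each fiber of [phi] the merger identifies all vertices of that fiber
   with a single node; [phi] is constant on these classes, so it factors
   through the quotient as a functor [kappa] whose fiber over [X] has the
   merged node as its only vertex.  Since identifying objects creates new
   composites, morphisms of the quotient are reduced chains of arrows of [N1];
   nestedness of [N1] makes composites of non-identity arrows non-identities,
   and the quotient is nested because ranking nodes by the grade of their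
   image in [N2], then by their grade in [N1] (fiber vertices ranked on top),
   is constant on merged classes and strictly increasing along flags. *)

Set Implicit Arguments.
Unset Strict Implicit.
Unset Printing Implicit Defensive.

Definition pdec (P : Prop) : {P} + {~ P} := excluded_middle_informative P.

Definition cod {C : Category} (a : Arr C) : C := (projT1 a).2.

Section ArrowCalculus.
Variable C : Category.

Lemma arr_inj (A B : C) (f g : Hom A B) : arr f = arr g -> f = g.
Proof. exact: inj_pair2. Qed.

Lemma arr_neq_flag (A B : C) (f : Hom A B) : A <> B -> is_flag (arr f).
Proof.
move=> neAB [X e]; apply: neAB.
have eA := f_equal (fun x : Arr C => (projT1 x).1) e.
have eB := f_equal (fun x : Arr C => (projT1 x).2) e.
by rewrite /= in eA eB; rewrite eA eB.
Qed.

(* Junk value: [comp_arr b a = a] when [b] does not start where [a] ends. *)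
Definition comp_arr (b a : Arr C) : Arr C :=
  match pdec (cod a = dom b) with
  | left e => arr (cmp (projT2 b)
       (eq_rect (cod a) (fun X => Hom (dom a) X) (projT2 a) (dom b) e))
  | right _ => a
  end.

Lemma comp_arr_arr (A B D : C) (f : Hom A B) (g : Hom B D) :
  comp_arr (arr g) (arr f) = arr (cmp g f).
Proof.
rewrite /comp_arr; case: pdec => [e|[]] //.
by rewrite (UIP_refl _ _ e).
Qed.

Lemma composable_arr (a b : Arr C) : cod a = dom b ->
  exists (A B D : C) (f : Hom A B) (g : Hom B D), a = arr f /\ b = arr g.
Proof.
case: a => [[A B] f]; case: b => [[B' D] g]; rewrite /cod /dom /= => e.
subst B'; by exists A, B, D, f, g.
Qed.

Lemma dom_comp_arr (a b : Arr C) : cod a = dom b -> dom (comp_arr b a) = dom a.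
Proof. by move/composable_arr=> [A [B [D [f [g [-> ->]]]]]]; rewrite comp_arr_arr. Qed.

Lemma cod_comp_arr (a b : Arr C) : cod a = dom b -> cod (comp_arr b a) = cod b.
Proof. by move/composable_arr=> [A [B [D [f [g [-> ->]]]]]]; rewrite comp_arr_arr. Qed.

Lemma comp_arrA (a b c : Arr C) : cod a = dom b -> cod b = dom c ->
  comp_arr c (comp_arr b a) = comp_arr (comp_arr c b) a.
Proof.
move/composable_arr=> [A [B [D [f [g [-> ->]]]]]].
case: c => [[D' K] h]; rewrite /cod /dom /= => e; subst D'.
by rewrite !comp_arr_arr cmp_assoc.
Qed.

Lemma comp_arr_idr (a : Arr C) X : dom a = X -> comp_arr a (idarr X) = a.
Proof.
case: a => [[A B] f]; rewrite /dom /= => <-.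
by rewrite /idarr comp_arr_arr cmp_id_r.
Qed.

Lemma comp_arr_idl (a : Arr C) X : cod a = X -> comp_arr (idarr X) a = a.
Proof.
case: a => [[A B] f]; rewrite /cod /= => <-.
by rewrite /idarr comp_arr_arr cmp_id_l.
Qed.

End ArrowCalculus.

Section FunctorArrows.
Variables (C D : Category) (F : Functor C D).

Lemma farr_comp (a b : Arr C) :
  cod a = dom b -> farr F (comp_arr b a) = comp_arr (farr F b) (farr F a).
Proof.
move/composable_arr=> [A [B [E [f [g [-> ->]]]]]].
by rewrite comp_arr_arr /farr /= fmor_cmp comp_arr_arr.
Qed.

Lemma farr_cmp (A B E : C) (g : Hom B E) (f : Hom A B) :
  farr F (arr (cmp g f)) = comp_arr (farr F (arr g)) (farr F (arr f)).
Proof. by rewrite /farr /= fmor_cmp comp_arr_arr. Qed.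

Lemma farr_idarr (X : C) : farr F (idarr X) = idarr (F X).
Proof. by rewrite /farr /idarr /= fmor_id. Qed.

Lemma epi_functor_surj : epi_functor F -> forall Y : D, exists X, F X = Y.
Proof.
move=> epiF Y.
suff gen_dom : forall a, generated F a -> exists X, F X = dom a.
  exact: gen_dom (epiF (idarr Y)).
by move=> a; elim=> [b|A B E g f _ _ _ IH] //; exists (dom b).
Qed.

End FunctorArrows.

Section RankFunctor.
Variables (C : Category) (m : nat) (r : C -> nat).
Hypothesis r_lt : forall A, r A < m.
Hypothesis r_le : forall A B, Hom A B -> r A <= r B.

Definition rank_functor : Functor C (ordinal_category m).
Proof.
refine {| fobj := fun A => (Ordinal (r_lt A) : Obj (ordinal_category m));
          fmor := fun A B f => r_le f |}.
- by move=> *; apply: eq_irrelevance.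
- by move=> *; apply: eq_irrelevance.
Defined.

Lemma nested_graph_of_rank :
  (forall a : Arr C, is_flag a -> r (dom a) < r (cod a)) -> nested_graph C.
Proof.
move=> r_flag; exists m, rank_functor => a /r_flag.
case: a => [[A B] f] /= lt_AB; apply: arr_neq_flag => /(f_equal val) /= e.
by rewrite e ltnn in lt_AB.
Qed.

End RankFunctor.

Lemma ordinal_arr_identity (n : nat) (i j : ordinal_category n) (p : Hom i j) :
  i = j -> is_identity (arr p).
Proof.
move=> eij; subst j; exists i; rewrite /idarr; congr arr.
exact: eq_irrelevance.
Qed.

Section NestedGraph.
Variables (N : Category) (n : nat) (G : Functor N (ordinal_category n)).
Hypothesis G_flag : forall a : Arr N, is_flag a -> is_flag (farr G a).

Lemma grade_le (A B : N) (f : Hom A B) : G A <= G B.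
Proof. exact: (fmor G f). Qed.

Lemma grade_lt (A B : N) (f : Hom A B) : A <> B -> G A < G B.
Proof.
move=> neAB; rewrite ltn_neqAle grade_le // andbT; apply/eqP => eG.
have := G_flag (@arr_neq_flag _ _ _ f neAB); apply.
by apply: ordinal_arr_identity; apply: val_inj.
Qed.

Lemma endo_id (A : N) (f : Hom A A) : f = idm A.
Proof.
case: (classic (is_identity (arr f))) => [[X e]|nf].
- have eX := f_equal (fun x : Arr N => (projT1 x).1) e.
  rewrite /= in eX; subst X; exact: arr_inj e.
- by case: (G_flag nf); apply: ordinal_arr_identity.
Qed.

Lemma arr_endo (A B : N) (f : Hom A B) : A = B -> arr f = idarr A.
Proof. by move=> eAB; subst B; rewrite (endo_id f). Qed.

Lemma flag_neq (A B : N) (f : Hom A B) : is_flag (arr f) -> A <> B.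
Proof. by move=> fl eAB; apply: fl; exists A; rewrite arr_endo. Qed.

Lemma hom_antisym (A B A' B' : N) :
  Hom A B -> Hom A' B' -> A' = B -> B' = A -> A = B.
Proof.
move=> f g eA' eB'; subst A' B'; apply: NNPP => neAB.
by have := grade_lt f neAB; have := grade_le g; lia.
Qed.

End NestedGraph.

Definition fiber_incl (C D : Category) (F : Functor C D) (X : D) :
  Functor (fiber F X) C.
Proof.
refine {| fobj := fun a : fiber F X => proj1_sig a;
          fmor := fun a b (u : Hom a b) => proj1_sig u |}.
- by [].
- by [].
Defined.

Lemma fiber_incl_flag (C D : Category) (F : Functor C D) (X : D)
  (x : Arr (fiber F X)) : is_flag x -> is_flag (farr (fiber_incl F X) x).
Proof.
move=> fx [Z e]; apply: fx; case: x e => [[a b] u] /= e.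
have ea := f_equal (fun y : Arr C => (projT1 y).1) e.
have eb := f_equal (fun y : Arr C => (projT1 y).2) e.
rewrite /= in ea eb.
have eab : a = b by apply: sig_eq_irr; rewrite ea eb.
subst b Z; exists a; congr arr; apply: sig_eq_irr; exact: arr_inj e.
Qed.

Lemma nested_fiber (C D : Category) (F : Functor C D) (X : D) :
  nested_graph C -> nested_graph (fiber F X).
Proof.
move=> [n [G G_flag]]; exists n, (functor_comp G (fiber_incl F X)) => x fx.
exact: G_flag _ (fiber_incl_flag fx).
Qed.

Section ObjectQuotient.
Variables (C : Category) (n : nat) (G : Functor C (ordinal_category n)).
Hypothesis G_flag : forall a : Arr C, is_flag a -> is_flag (farr G a).
Variable canon : C -> C.
Hypothesis canon_idem : forall A, canon (canon A) = canon A.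

Definition proper (a : Arr C) := dom a <> cod a.

Lemma proper_flag a : proper a -> is_flag a.
Proof. by case: a => [[A B] f]; apply: arr_neq_flag. Qed.

Lemma proper_comp_arr a b :
  proper a -> proper b -> cod a = dom b -> proper (comp_arr b a).
Proof.
move=> + + /[dup] eab /composable_arr [A [B [D [f [g [ea eb]]]]]]; subst a b.
rewrite comp_arr_arr /proper /dom /cod /= => neAB neBD eAD; subst D.
by have := grade_lt G_flag f neAB; have := grade_lt G_flag g neBD; lia.
Qed.

(* A morphism of the quotient is a reduced chain: a sequence of proper arrows
   of [C], consecutive ones meeting in identified objects but never
   composable in [C]. *)
Definition chain_push (a : Arr C) (l : seq (Arr C)) : seq (Arr C) :=
  match l with
  | [::] => [:: a]
  | b :: l' => if pdec (cod a = dom b) then comp_arr b a :: l' else a :: b :: l'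
  end.

Fixpoint chain_cat (l1 l2 : seq (Arr C)) : seq (Arr C) :=
  match l1 with
  | [::] => l2
  | a :: l1' =>
      match l1' with [::] => chain_push a l2 | _ :: _ => a :: chain_cat l1' l2 end
  end.

Definition unglued (a : Arr C) (l : seq (Arr C)) : Prop :=
  match l with [::] => True | b :: _ => cod a <> dom b end.

Fixpoint is_chain (X : C) (l : seq (Arr C)) (Y : C) : Prop :=
  match l with
  | [::] => X = Y
  | a :: l' => [/\ canon (dom a) = X, proper a, unglued a l'
                 & is_chain (canon (cod a)) l' Y]
  end.

Lemma chain_push_glue a b l :
  cod a = dom b -> chain_push a (b :: l) = comp_arr b a :: l.
Proof. by rewrite /=; case: pdec. Qed.

Lemma chain_push_unglued a l : unglued a l -> chain_push a l = a :: l.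
Proof. by case: l => [|b l] //= ne_ab; case: pdec. Qed.

Lemma chain_push_head a l : exists c l', chain_push a l = c :: l' /\ dom c = dom a.
Proof.
case: l => [|b l]; first by exists a, [::].
case: (pdec (cod a = dom b)) => eab.
- rewrite chain_push_glue //; exists (comp_arr b a), l.
  by split=> //; apply: dom_comp_arr.
- by rewrite chain_push_unglued //; exists a, (b :: l).
Qed.

Lemma chain_cat_head a l l2 :
  exists c l', chain_cat (a :: l) l2 = c :: l' /\ dom c = dom a.
Proof.
case: l => [|a' l] /=; first exact: chain_push_head.
by exists a, (chain_cat (a' :: l) l2).
Qed.

Lemma chain_cat1 a l : chain_cat [:: a] l = chain_push a l.
Proof. by []. Qed.

Lemma chain_cat_consS a a' l l2 :
  chain_cat [:: a, a' & l] l2 = a :: chain_cat (a' :: l) l2.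
Proof. by []. Qed.

Lemma chain_cat_nil l : chain_cat l [::] = l.
Proof. by elim: l => [|a [|a' l] IH] //; rewrite chain_cat_consS IH. Qed.

Lemma chain_push_cat a b l3 :
  chain_cat (chain_push a [:: b]) l3 = chain_push a (chain_push b l3).
Proof.
case: (pdec (cod a = dom b)) => eab; last first.
  rewrite chain_push_unglued //=; have [c [l' [-> ec]]] := chain_push_head b l3.
  by rewrite chain_push_unglued //= ec.
rewrite chain_push_glue // chain_cat1.
case: l3 => [|c l3]; first by rewrite (chain_push_glue [::] eab).
case: (pdec (cod b = dom c)) => ebc.
- have eab_c : cod a = dom (comp_arr c b) by rewrite dom_comp_arr.
  have eab_c' : cod (comp_arr b a) = dom c by rewrite cod_comp_arr.
  rewrite (chain_push_glue l3 ebc) (chain_push_glue l3 eab_c).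
  by rewrite (chain_push_glue l3 eab_c') comp_arrA.
- have u : unglued (comp_arr b a) (c :: l3) by rewrite /unglued cod_comp_arr.
  by rewrite (chain_push_unglued u) (@chain_push_unglued b (c :: l3) ebc) chain_push_glue.
Qed.

Lemma chain_catA l1 l2 l3 :
  chain_cat (chain_cat l1 l2) l3 = chain_cat l1 (chain_cat l2 l3).
Proof.
elim: l1 => [|a [|a' l1] IH] //; last first.
  have [c [l' [e _]]] := chain_cat_head a' l1 l2.
  by rewrite !chain_cat_consS e chain_cat_consS -e IH.
clear IH; case: l2 => [|b [|b' l2]] //; first exact: chain_push_cat.
rewrite !chain_cat1 chain_cat_consS; case: (pdec (cod a = dom b)) => eab.
- by rewrite !chain_push_glue.
- by rewrite !chain_push_unglued.
Qed.

Lemma is_chain_cat l1 l2 X Y Z :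
  is_chain X l1 Y -> is_chain Y l2 Z -> is_chain X (chain_cat l1 l2) Z.
Proof.
elim: l1 X => [|a [|a' l1] IH] X; first by move=> /= ->.
- clear IH; case=> da pa _ <-; rewrite chain_cat1.
  case: l2 => [|b l2]; first by move=> /= <-.
  case=> db pb ub cb; case: (pdec (cod a = dom b)) => eab.
  + rewrite chain_push_glue //; split.
    * by rewrite dom_comp_arr.
    * exact: proper_comp_arr.
    * by rewrite /unglued cod_comp_arr.
    * by rewrite cod_comp_arr.
  + by rewrite chain_push_unglued //; split.
- case=> da pa ua ca c2; rewrite chain_cat_consS.
  have [c [l' [e ec]]] := chain_cat_head a' l1 l2.
  have := IH _ ca c2; rewrite e => cc.
  by split=> //; rewrite /unglued ec.
Qed.

Definition qobj := {A : C | canon A = A}.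

Definition qhom (P Q : qobj) :=
  {l : seq (Arr C) | is_chain (proj1_sig P) l (proj1_sig Q)}.

Definition quotient_cat : Category.
Proof.
refine {| Obj := qobj; Hom := qhom;
          idm := fun P => exist _ [::] (erefl (proj1_sig P));
          cmp := fun P Q S (g : qhom Q S) (f : qhom P Q) =>
            exist _ (chain_cat (proj1_sig f) (proj1_sig g))
                    (is_chain_cat (proj2_sig f) (proj2_sig g)) |}.
- by move=> P Q f; apply: sig_eq_irr; rewrite /= chain_cat_nil.
- by move=> P Q f; apply: sig_eq_irr.
- by move=> P Q S T h g f; apply: sig_eq_irr; rewrite /= chain_catA.
Defined.

Definition quotient_obj (A : C) : qobj := exist _ (canon A) (canon_idem A).

Definition hom_chain (A B : C) (f : Hom A B) : seq (Arr C) :=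
  if pdec (A = B) then [::] else [:: arr f].

Lemma hom_chain_endo A (f : Hom A A) : hom_chain f = [::].
Proof. by rewrite /hom_chain; case: pdec. Qed.

Lemma hom_chain_neq A B (f : Hom A B) : A <> B -> hom_chain f = [:: arr f].
Proof. by rewrite /hom_chain; case: pdec. Qed.

Lemma hom_chain_proper (a : Arr C) : proper a -> hom_chain (projT2 a) = [:: a].
Proof. by case: a => [[A B] f]; apply: hom_chain_neq. Qed.

Lemma is_chain_hom A B (f : Hom A B) : is_chain (canon A) (hom_chain f) (canon B).
Proof. by rewrite /hom_chain; case: pdec => [e|] /=; rewrite ?e. Qed.

Definition quotient_functor : Functor C quotient_cat.
Proof.
refine {| fobj := fun A => (quotient_obj A : quotient_cat);
          fmor := fun A B f =>
            (exist _ (hom_chain f) (is_chain_hom f)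
              : @Hom quotient_cat (quotient_obj A) (quotient_obj B)) |}.
- by move=> A; apply: sig_eq_irr; rewrite /= hom_chain_endo.
- move=> A B D g f; apply: sig_eq_irr => /=.
  case: (classic (A = B)) => [eAB|neAB].
    by subst B; rewrite (endo_id G_flag f) cmp_id_r hom_chain_endo.
  case: (classic (B = D)) => [eBD|neBD].
    by subst D; rewrite (endo_id G_flag g) cmp_id_l hom_chain_endo chain_cat_nil.
  have neAD : A <> D.
    move=> eAD; subst D.
    by have := grade_lt G_flag f neAB; have := grade_lt G_flag g neBD; lia.
  rewrite !hom_chain_neq // chain_cat1 chain_push_glue //.
  by rewrite comp_arr_arr.
Defined.

Local Notation mu := quotient_functor.

Definition arr_chain (x : Arr quotient_cat) : seq (Arr C) :=
  proj1_sig (projT2 x : qhom (projT1 x).1 (projT1 x).2).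

Lemma is_chain_arr (x : Arr quotient_cat) :
  is_chain (proj1_sig (dom x)) (arr_chain x) (proj1_sig (cod x)).
Proof. exact: proj2_sig (projT2 x). Qed.

Lemma arr_chain_mu A B (f : Hom A B) : arr_chain (farr mu (arr f)) = hom_chain f.
Proof. by []. Qed.

Lemma arr_chain_cmp (P Q S : quotient_cat) (g : Hom Q S) (f : Hom P Q) :
  arr_chain (arr (cmp g f)) = chain_cat (arr_chain (arr f)) (arr_chain (arr g)).
Proof. by []. Qed.

Lemma quotient_arr_ext (x y : Arr quotient_cat) :
  proj1_sig (dom x) = proj1_sig (dom y) -> proj1_sig (cod x) = proj1_sig (cod y) ->
  arr_chain x = arr_chain y -> x = y.
Proof.
case: x => [[P Q] [l w]]; case: y => [[P' Q'] [l' w']].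
rewrite /dom /cod /arr_chain /= => eP eQ el.
have eP' : P = P' by apply: sig_eq_irr.
have eQ' : Q = Q' by apply: sig_eq_irr.
subst P' Q' l'; by rewrite (proof_irrelevance _ w w').
Qed.

Lemma quotient_flag_chain (x : Arr quotient_cat) : is_flag x -> arr_chain x <> [::].
Proof.
move=> fx el; apply: fx; exists (dom x); apply: quotient_arr_ext => //.
by have := is_chain_arr x; rewrite el /= => <-.
Qed.

Lemma chain_quotient_flag (x : Arr quotient_cat) : arr_chain x <> [::] -> is_flag x.
Proof. by move=> ne [X e]; apply: ne; rewrite e. Qed.

Lemma mu_flag A B (f : Hom A B) : A <> B -> is_flag (farr mu (arr f)).
Proof. by move=> neAB; apply: chain_quotient_flag; rewrite arr_chain_mu hom_chain_neq. Qed.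

Lemma split_chain_arr (x : Arr quotient_cat) a l : arr_chain x = a :: l ->
  exists rest : @Hom quotient_cat (quotient_obj (cod a)) (cod x),
    arr_chain (arr rest) = l /\ x = arr (cmp rest (fmor mu (projT2 a))).
Proof.
case: x => [[P Q] [l0 w]]; rewrite /arr_chain /= => e; subst l0.
have [da pa ua ca] := w.
exists (exist _ l ca); split=> //.
apply: quotient_arr_ext => //=.
by rewrite /arr_chain /= hom_chain_proper // chain_cat1 chain_push_unglued.
Qed.

Lemma quotient_functor_epi : epi_functor mu.
Proof.
case=> [[P Q] [l w]]; elim: l P w => [|a l IH] P w.
- have ePQ : P = Q by apply: sig_eq_irr.
  subst Q; have -> : w = erefl by apply: proof_irrelevance.
  have eP : (mu (proj1_sig P) : quotient_cat) = P by apply: sig_eq_irr; exact: proj2_sig P.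
  by have := gen_img mu (idarr (proj1_sig P)); rewrite farr_idarr eP.
- pose x : Arr quotient_cat := existT _ (P, Q) (exist _ (a :: l) w : qhom P Q).
  change (generated mu x).
  have [rest [el ->]] := @split_chain_arr x a l erefl.
  apply: gen_cmp; last exact: gen_img mu a.
  move: rest el => [l' w']; rewrite /arr_chain /= => el; subst l'.
  exact: IH.
Qed.

Lemma functor_eq_on_mu (E : Category) (F1 F2 : Functor quotient_cat E) :
  (forall a, farr F1 (farr mu a) = farr F2 (farr mu a)) -> functor_eq F1 F2.
Proof.
move=> eF x; elim: (quotient_functor_epi x) => [a|A B D g f _ IHg _ IHf].
- exact: eF.
- by rewrite !farr_cmp IHg IHf.
Qed.

Section Lift.
Variables (E : Category) (H : Functor C E).
Hypothesis H_canon_eq : forall A B, canon A = canon B -> H A = H B.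

Lemma H_canon A : H (canon A) = H A.
Proof. by apply: H_canon_eq; rewrite canon_idem. Qed.

Fixpoint chain_image (X : E) (l : seq (Arr C)) : Arr E :=
  match l with
  | [::] => idarr X
  | a :: l' => comp_arr (chain_image (H (cod a)) l') (farr H a)
  end.

Lemma chain_image_ends l X Y : is_chain X l Y ->
  dom (chain_image (H X) l) = H X /\ cod (chain_image (H X) l) = H Y.
Proof.
elim: l X => [|a l IH] X /=; first by move=> ->.
case=> da _ _ /IH []; rewrite !H_canon => d c.
by rewrite dom_comp_arr ?cod_comp_arr ?d // -da H_canon.
Qed.

Lemma chain_image1 X a : chain_image X [:: a] = farr H a.
Proof. exact: comp_arr_idl. Qed.

Lemma chain_image_cat l1 l2 X Y Z : is_chain X l1 Y -> is_chain Y l2 Z ->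
  chain_image (H X) (chain_cat l1 l2)
  = comp_arr (chain_image (H Y) l2) (chain_image (H X) l1).
Proof.
elim: l1 X => [|a [|a' l1] IH] X.
- move=> /= -> c2; have [d _] := chain_image_ends c2.
  by rewrite comp_arr_idr.
- clear IH; case=> _ _ _ eY; rewrite chain_cat1 chain_image1.
  case: l2 => [|b l2].
  + move=> /= eYZ; subst Z.
    by rewrite -eY H_canon.
  + case=> db _ _ c2; have [d c] := chain_image_ends c2; rewrite H_canon in d c.
    case: (pdec (cod a = dom b)) => eab.
    * rewrite chain_push_glue //= farr_comp // comp_arrA ?cod_comp_arr ?d //.
      by change (H (cod a) = H (dom b)); rewrite eab.
    * by rewrite chain_push_unglued.
- case=> _ _ _ ca c2.
  have {}ca : is_chain (canon (cod a)) (a' :: l1) Y := ca.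
  have IHc := IH _ ca c2.
  have [d c] := chain_image_ends ca; have [d2 _] := chain_image_ends c2.
  rewrite H_canon in IHc d c.
  by rewrite chain_cat_consS /= IHc comp_arrA ?d // c d2.
Qed.

Definition hom_of_arr (a : Arr E) (X Y : E) (e : projT1 a = (X, Y)) : Hom X Y :=
  eq_rect (projT1 a) (fun p => Hom p.1 p.2) (projT2 a) (X, Y) e.

Lemma arr_hom_of_arr (a : Arr E) X Y (e : projT1 a = (X, Y)) : arr (hom_of_arr e) = a.
Proof. by case: a e => p f /= e; subst p. Qed.

Lemma chain_image_ends_pair X l Y (w : is_chain X l Y) :
  projT1 (chain_image (H X) l) = (H X, H Y).
Proof.
have [] := chain_image_ends w; rewrite /dom /cod.
by case: (projT1 _) => u v /= -> ->.
Qed.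

Definition quotient_lift : Functor quotient_cat E.
Proof.
refine {| fobj := fun P : quotient_cat => H (proj1_sig (P : qobj));
          fmor := fun P Q (c : qhom P Q) =>
            hom_of_arr (chain_image_ends_pair (proj2_sig c)) |}.
- by move=> P; apply: arr_inj; rewrite arr_hom_of_arr.
- move=> P Q S g f; apply: arr_inj.
  rewrite arr_hom_of_arr -comp_arr_arr !arr_hom_of_arr.
  exact: chain_image_cat (proj2_sig f) (proj2_sig g).
Defined.

Lemma quotient_lift_mu : functor_eq (functor_comp quotient_lift mu) H.
Proof.
case=> [[A B] f]; rewrite /farr /= arr_hom_of_arr.
case: (classic (A = B)) => [eAB|neAB].
- by subst B; rewrite hom_chain_endo (endo_id G_flag f) fmor_id /= H_canon.
- by rewrite hom_chain_neq // chain_image1.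
Qed.

Lemma quotient_lift_unique (F : Functor quotient_cat E) :
  functor_eq (functor_comp F mu) H -> functor_eq F quotient_lift.
Proof.
move=> eF; apply: functor_eq_on_mu => a.
exact: etrans (eF a) (esym (quotient_lift_mu a)).
Qed.

End Lift.

Lemma quotient_functor_quotient :
  is_quotient_by mu (fun A B => canon A = canon B).
Proof.
split=> [A B eAB|E H H_canon_eq]; first exact: sig_eq_irr.
exists (quotient_lift H_canon_eq); split; first exact: quotient_lift_mu.
exact: quotient_lift_unique.
Qed.

Lemma chain_cat_single l1 l2 z : l1 <> [::] -> l2 <> [::] -> chain_cat l1 l2 = [:: z] ->
  exists x y, [/\ l1 = [:: x], l2 = [:: y], cod x = dom y & z = comp_arr y x].
Proof.
case: l1 => [|x [|x' l1]] // _; case: l2 => [|y l2] // _.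
- rewrite chain_cat1; case: (pdec (cod x = dom y)) => exy.
  + by rewrite chain_push_glue // => -[<- ->]; exists x, y.
  + by rewrite chain_push_unglued.
- by rewrite chain_cat_consS; have [c [l' [-> _]]] := chain_cat_head x' l1 (y :: l2).
Qed.

Lemma quotient_functor_irreducible a : irreducible a -> irreducible (farr mu a).
Proof.
case: a => [[A B] f] [fl irr_f]; have neAB := flag_neq G_flag fl.
split; first exact: mu_flag.
move=> [P [Q [S [g [h [fg [fh e]]]]]]].
have := f_equal arr_chain e; rewrite arr_chain_mu hom_chain_neq // arr_chain_cmp.
move=> /esym /(chain_cat_single (quotient_flag_chain fh) (quotient_flag_chain fg)).
move=> [x [y [ex ey exy ez]]].
have := is_chain_arr (arr h); rewrite ex => -[_ px _ _].
have := is_chain_arr (arr g); rewrite ey => -[_ py _ _].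
move: exy ez px py => /composable_arr [A' [B' [D' [f' [g' [-> ->]]]]]].
rewrite comp_arr_arr => ez px py; apply: irr_f.
exists A', B', D', g', f'; split; [exact: arr_neq_flag | split; [exact: arr_neq_flag|]].
by case: ez.
Qed.

Lemma quotient_functor_merger : merger mu.
Proof.
split; [split | split; first exact: quotient_functor_epi].
- by move=> a /quotient_functor_irreducible; right.
- case=> [[A B] f] [fl _] [X e]; exfalso.
  by have := @mu_flag _ _ f (flag_neq G_flag fl); apply; exists X.
- exists (fun A B => canon A = canon B); split; last exact: quotient_functor_quotient.
  by split=> [//|]; split=> [x y ->|x y z -> ->].
Qed.

Lemma irreducible_quotient (x : Arr quotient_cat) :
  irreducible x -> exists a, irreducible a /\ x = farr mu a.
Proof.
move=> [fx irr_x]; have := quotient_flag_chain fx.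
case ex: (arr_chain x) => [|a [|b l]] // _.
- have [da pa _ ca] : is_chain (proj1_sig (dom x)) [:: a] (proj1_sig (cod x)).
    by rewrite -ex; exact: is_chain_arr.
  have exa : x = farr mu a.
    apply: quotient_arr_ext; [exact: esym da | exact: esym ca |].
    by rewrite ex; exact: esym (hom_chain_proper pa).
  exists a; split=> //; split; first exact: proper_flag.
  move=> [A [B [D [g [f [fg [ff ea]]]]]]]; apply: irr_x.
  exists (mu A), (mu B), (mu D), (fmor mu g), (fmor mu f); split.
    exact: mu_flag (flag_neq G_flag fg).
  split; first exact: mu_flag (flag_neq G_flag ff).
  by rewrite exa ea farr_cmp comp_arr_arr.
- have [_ pa _ _] : is_chain (proj1_sig (dom x)) [:: a, b & l] (proj1_sig (cod x)).
    by rewrite -ex; exact: is_chain_arr.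
  have [rest [el ex']] := split_chain_arr ex; exfalso; apply: irr_x.
  exists _, _, _, rest, (fmor mu (projT2 a)); split.
    by apply: chain_quotient_flag; rewrite el.
  split=> //; apply: chain_quotient_flag.
  by change (hom_chain (projT2 a) <> [::]); rewrite hom_chain_proper.
Qed.

Section Rank.
Variables (m : nat) (r : C -> nat).
Hypothesis r_lt : forall A, r A < m.
Hypothesis r_canon : forall A, r (canon A) = r A.
Hypothesis r_proper : forall A B, Hom A B -> A <> B -> r A < r B.

Lemma chain_rank l X Y :
  is_chain X l Y -> r X <= r Y /\ (l <> [::] -> r X < r Y).
Proof.
elim: l X => [|a l IH] X /=; first by move=> ->.
case=> <- pa _ /IH [le_cod _]; rewrite r_canon in le_cod.
have lt_a : r (dom a) < r (cod a) := r_proper (projT2 a) pa.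
by rewrite r_canon; split=> [|_]; lia.
Qed.

Lemma nested_quotient : nested_graph quotient_cat.
Proof.
pose rq (P : quotient_cat) := r (proj1_sig (P : qobj)).
have rq_lt P : rq P < m by apply: r_lt.
have rq_le P Q : Hom P Q -> rq P <= rq Q by case=> l /chain_rank [].
apply: (nested_graph_of_rank rq_lt rq_le) => x /quotient_flag_chain.
exact: (chain_rank (is_chain_arr x)).2.
Qed.

End Rank.

End ObjectQuotient.

Section MergerContraction.
Variables (N1 N2 : Category) (phi : Functor N1 N2).
Variables (n1 : nat) (G1 : Functor N1 (ordinal_category n1)).
Variables (n2 : nat) (G2 : Functor N2 (ordinal_category n2)).
Hypothesis G1_flag : forall a : Arr N1, is_flag a -> is_flag (farr G1 a).
Hypothesis G2_flag : forall a : Arr N2, is_flag a -> is_flag (farr G2 a).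
Hypothesis phi_adm : admissible phi.
Hypothesis phi_epi : epi_functor phi.

(* [A] is a vertex of the fiber of [phi] containing it. *)
Definition fiber_vertex (A : N1) : Prop :=
  forall B (f : Hom A B), phi B = phi A -> B = A.

Lemma not_fiber_vertex A :
  ~ fiber_vertex A -> exists B (f : Hom A B), phi B = phi A /\ B <> A.
Proof.
move=> nvA; apply: NNPP => none; apply: nvA => B f eB.
by apply: NNPP => neBA; apply: none; exists B, f.
Qed.

Lemma fiber_vertex_exists X : exists V, fiber_vertex V /\ phi V = X.
Proof.
have [A0 eA0] := epi_functor_surj phi_epi X.
suff : forall k A, n1 - G1 A <= k -> phi A = X -> exists V, fiber_vertex V /\ phi V = X.
  by apply; last exact: eA0.
elim=> [|k IH] A hk eA; case: (classic (fiber_vertex A)) => [vA|]; try by exists A.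
all: move=> /not_fiber_vertex [B [f [eB neBA]]].
all: have := grade_lt G1_flag f (nesym neBA); have := ltn_ord (G1 B) => ? ?.
- lia.
- by apply: (IH B); [lia | rewrite eB].
Qed.

Definition vertex_of (X : N2) : N1 :=
  proj1_sig (constructive_indefinite_description _ (fiber_vertex_exists X)).

Lemma vertex_ofP X : fiber_vertex (vertex_of X) /\ phi (vertex_of X) = X.
Proof. exact: proj2_sig (constructive_indefinite_description _ (fiber_vertex_exists X)). Qed.

(* The merger identifies all vertices of a fiber with a chosen one. *)
Definition canon (A : N1) : N1 :=
  if pdec (fiber_vertex A) then vertex_of (phi A) else A.

Lemma canon_vertex A : fiber_vertex A -> canon A = vertex_of (phi A).
Proof. by rewrite /canon; case: pdec. Qed.

Lemma canon_id A : ~ fiber_vertex A -> canon A = A.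
Proof. by rewrite /canon; case: pdec. Qed.

Lemma canon_phi A : phi (canon A) = phi A.
Proof. by rewrite /canon; case: pdec => [vA|//]; exact: (vertex_ofP (phi A)).2. Qed.

Lemma fiber_vertex_canon A : fiber_vertex (canon A) <-> fiber_vertex A.
Proof.
rewrite /canon; case: pdec => vA; split=> // _.
exact: (vertex_ofP (phi A)).1.
Qed.

Lemma canon_idem A : canon (canon A) = canon A.
Proof.
case: (classic (fiber_vertex A)) => [vA|nvA]; last by rewrite !canon_id.
have vcA : fiber_vertex (canon A) by apply/fiber_vertex_canon.
by rewrite (canon_vertex vcA) canon_phi canon_vertex.
Qed.

Lemma phi_canon_eq A B : canon A = canon B -> phi A = phi B.
Proof. by move=> eAB; rewrite -canon_phi eAB canon_phi. Qed.

Let N2' := quotient_cat G1_flag canon.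
Let mu : Functor N1 N2' := quotient_functor G1_flag canon_idem.
Let kappa : Functor N2' N2 := quotient_lift G1_flag canon_idem phi_canon_eq.

Lemma kappa_mu a : farr kappa (farr mu a) = farr phi a.
Proof. exact: quotient_lift_mu. Qed.

Lemma contracted_flag_not_vertex a :
  is_flag a -> contracts phi a -> ~ fiber_vertex (dom a).
Proof.
case: a => [[A B] f] /= fl [X e] vA; apply: (flag_neq G1_flag fl).
have eA := f_equal (fun y : Arr N2 => (projT1 y).1) e.
have eB := f_equal (fun y : Arr N2 => (projT1 y).2) e.
by rewrite /= in eA eB; symmetry; apply: (vA B f); rewrite eA eB.
Qed.

Lemma kappa_admissible : admissible kappa.
Proof.
split.
- move=> x /(irreducible_quotient canon_idem) [a [ia ->]].
  by rewrite kappa_mu; apply: phi_adm.1.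
- move=> x ix cx y iy exy.
  have [a [ia ex]] := irreducible_quotient canon_idem ix.
  have [b [ib ey]] := irreducible_quotient canon_idem iy.
  subst x y; move: cx; rewrite /contracts !kappa_mu => ca.
  apply: (phi_adm.2 a ia ca b ib).
  have ecan : canon (dom b) = canon (dom a) := f_equal (@proj1_sig _ _) exy.
  have nva := contracted_flag_not_vertex ia.1 ca.
  case: (classic (fiber_vertex (dom b))) => [vb|nvb].
  + by case: nva; apply/fiber_vertex_canon; rewrite -ecan; apply/fiber_vertex_canon.
  + by rewrite -(canon_id nvb) ecan canon_id.
Qed.

Lemma kappa_epi : epi_functor kappa.
Proof.
move=> y; elim: (phi_epi y) => [a|A B D g f _ IHg _ IHf].
- by rewrite -kappa_mu; apply: gen_img.
- exact: gen_cmp.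
Qed.

(* Lexicographic in the grades of [phi A] and of [A], except that the vertices
   of a fiber all share the top second coordinate [n1], so that the rank is
   constant on merged classes. *)
Definition merge_rank (A : N1) : nat :=
  G2 (phi A) * n1.+1 + (if pdec (fiber_vertex A) then n1 else G1 A).

Lemma merge_rank_lt A : merge_rank A < n2 * n1.+1.
Proof.
rewrite /merge_rank; have := ltn_ord (G1 A).
have : (G2 (phi A)).+1 * n1.+1 <= n2 * n1.+1 by rewrite leq_mul2r ltn_ord orbT.
by rewrite mulSn; case: pdec => [?|?] /=; lia.
Qed.

Lemma merge_rank_canon A : merge_rank (canon A) = merge_rank A.
Proof.
case: (classic (fiber_vertex A)) => [vA|nvA]; last by rewrite canon_id.
have vcA : fiber_vertex (canon A) by apply/fiber_vertex_canon.
by rewrite /merge_rank canon_phi; do 2!case: pdec => [?|?] //=.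
Qed.

Lemma merge_rank_lt_hom A B : Hom A B -> A <> B -> merge_rank A < merge_rank B.
Proof.
move=> f neAB; rewrite /merge_rank.
have := ltn_ord (G1 A); have := ltn_ord (G1 B).
case: (classic (phi A = phi B)) => [ephi|nephi].
- have nvA : ~ fiber_vertex A by move=> vA; apply: neAB; symmetry; apply: (vA B f).
  have := grade_lt G1_flag f neAB; rewrite ephi.
  by do 2!case: pdec => [?|?] //=; lia.
- have : (G2 (phi A)).+1 * n1.+1 <= G2 (phi B) * n1.+1.
    by rewrite leq_mul2r (grade_lt G2_flag (fmor phi f) nephi) orbT.
  by rewrite mulSn; do 2!case: pdec => [?|?] /=; lia.
Qed.

Lemma nested_merged : nested_graph N2'.
Proof. exact: nested_quotient merge_rank_lt merge_rank_canon merge_rank_lt_hom. Qed.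

Lemma kappa_vertex_of X : kappa (mu (vertex_of X)) = X.
Proof. by rewrite /= canon_phi; case: (vertex_ofP X). Qed.

Definition kappa_fiber_root (X : N2) : fiber kappa X :=
  exist _ (mu (vertex_of X)) (kappa_vertex_of X).

Lemma kappa_fiber_root_vertex X : is_vertex (kappa_fiber_root X).
Proof.
move=> [[P Q] u]; rewrite /dom /= => eP fu; subst P.
have := quotient_flag_chain (fiber_incl_flag fu).
case ex: (arr_chain _) => [|a l] // _.
have [rest _] := split_chain_arr canon_idem ex.
have := is_chain_arr (arr (proj1_sig u)); rewrite ex => -[/= da pa _ _].
have va : fiber_vertex (dom a).
  apply/fiber_vertex_canon; rewrite da; apply/fiber_vertex_canon.
  exact: (vertex_ofP X).1.
have phi_a : phi (dom a) = X by rewrite -canon_phi da canon_phi; case: (vertex_ofP X).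
have phi_ab : phi (dom a) = phi (cod a).
  apply: (hom_antisym G2_flag (fmor phi (projT2 a)) (fmor kappa rest)).
  - by rewrite /= canon_phi.
  - by rewrite (proj2_sig Q) phi_a.
by apply: pa; symmetry; apply: (va _ (projT2 a)); rewrite phi_ab.
Qed.

Lemma kappa_fiber_vertex_unique X (P : fiber kappa X) :
  is_vertex P -> P = kappa_fiber_root X.
Proof.
move=> vP; have phiA : phi (proj1_sig (proj1_sig P)) = X := proj2_sig P.
have cA := proj2_sig (proj1_sig P).
set A := proj1_sig (proj1_sig P) in phiA cA.
have eP : P = exist _ (mu A) (etrans (canon_phi A) phiA).
  by apply: sig_eq_irr; apply: sig_eq_irr; rewrite /= cA.
have vA : fiber_vertex A.
  apply: NNPP => /not_fiber_vertex [B [f [eB neBA]]].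
  have phiB : kappa (mu B) = X by rewrite /= canon_phi eB.
  have uf : arr (fmor kappa (fmor mu f)) = idarr X.
    have := kappa_mu (arr f); rewrite /farr /= => ->.
    by rewrite (arr_endo G2_flag (fmor phi f) (esym eB)) phiA.
  pose u : @Hom (fiber kappa X) (exist _ (mu A) (etrans (canon_phi A) phiA))
    (exist _ (mu B) phiB) :=
    exist _ (fmor mu f) uf.
  apply: (vP (arr u)); first by rewrite eP.
  have : is_flag (farr mu (arr f)) by exact: mu_flag (nesym neBA).
  rewrite /is_flag => + [Z eZ]; apply.
  by exists (proj1_sig Z); have := f_equal (farr (fiber_incl kappa X)) eZ; rewrite farr_idarr.
rewrite eP; apply: sig_eq_irr; apply: sig_eq_irr => /=.
have vX := (vertex_ofP X).1.
by rewrite -{1}cA !canon_vertex // phiA.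
Qed.

Lemma kappa_contraction : contraction kappa.
Proof.
split; [exact: kappa_admissible | split; first exact: kappa_epi].
move=> X; split; first exact: nested_fiber nested_merged.
exists (kappa_fiber_root X); split; first exact: kappa_fiber_root_vertex.
exact: kappa_fiber_vertex_unique.
Qed.

Lemma merger_contraction_factorization :
  exists (N2' : Category) (mu : Functor N1 N2') (kappa : Functor N2' N2),
    nested_graph N2' /\ merger mu /\ contraction kappa /\
    functor_eq phi (functor_comp kappa mu).
Proof.
exists N2', mu, kappa; split; first exact: nested_merged.
split; first exact: quotient_functor_merger.
split; first exact: kappa_contraction.
move=> a; exact: esym (kappa_mu a).
Qed.

End MergerContraction.

Theorem mainTheorem3 (N1 N2 : Category) (phi : Functor N1 N2) :
  nested_graph N1 -> nested_graph N2 ->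
  admissible phi -> epi_functor phi ->
  exists (N2' : Category) (mu : Functor N1 N2') (kappa : Functor N2' N2),
    nested_graph N2' /\ merger mu /\ contraction kappa /\
    functor_eq phi (functor_comp kappa mu).
Proof.
move=> [n1 [G1 G1_flag]] [n2 [G2 G2_flag]] phi_adm phi_epi.
exact: merger_contraction_factorization G1_flag G2_flag phi_adm phi_epi.
Qed.
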